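(* Suppose the loss $f\colon\Theta\to\mathbb{R}$ is convex. Then for the core Two-Tailed Averaging algorithm run on any sequence of iterates $(\theta_t)$, the sequence $(F_N)$ of losses of the short averages at switch points is monotonically non-increasing: $F_{N+1}\le F_N$ for every $N\in\mathbb{N}$ for which the $(N+1)$-th switch point exists.
   Context: Let $\Theta=\mathbb{R}^d$, let $(\theta_t)_{t\in\mathbb{N}_0}$ be a sequence in $\Theta$, let $f\colon\Theta\to\mathbb{R}$ be a loss function, and let $E\in\mathbb{N}$ be the evaluation period. For integers $t\ge \Delta\ge 1$ write $\mathrm{avg}(t,\Delta)=\frac{1}{\Delta}\sum_{i=t+1-\Delta}^{t}\theta_i$. Core Two-Tailed Averaging: it maintains integers $S,L$ and vectors $\theta^S,\theta^L$, initially $S=L=0$, $\theta^S=\theta^L=0$. For $t=1,2,\dots$: first $\theta_t$ is added to both averages, i.e. $\theta^S\leftarrow\theta^S+(\theta_t-\theta^S)/(S+1)$, $S\leftarrow S+1$, and $\theta^L\leftarrow\theta^L+(\theta_t-\theta^L)/(L+1)$, $L\leftarrow L+1$ (so $\theta^S=\mathrm{avg}(t,S)$, $\theta^L=\mathrm{avg}(t,L)$). Then, if $E$ divides $t$: if $f(\theta^S)\le f(\theta^L)$, a switch is performed: $L\leftarrow S$, $\theta^L\leftarrow\theta^S$, $S\leftarrow 0$. $S'(t),\theta^{S'}(t)$ denote the values of $S,\theta^S$ in the $t$-th pass after $\theta_t$ has been added but before the possible switch. A time step $n$ is a switch point if a switch is performed at $t=n$. For $N\in\mathbb{N}$: $Q_N$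 is the $N$-th switch point (in increasing order), $F_N=f(\theta^{S'}(Q_N))$, and $S_N=S'(Q_N)$. *)

(* R : realType, Theta = 'rV[R]_d. *)
From mathcomp Require Import all_boot all_order all_algebra.
From mathcomp Require Import all_classical all_reals all_analysis.
Set Implicit Arguments. Unset Strict Implicit. Unset Printing Implicit Defensive.
Import Order.TTheory GRing.Theory Num.Theory.
Local Open Scope ring_scope.

Section TTA.
Variables (R : realType) (d : nat).
Local Notation V := 'rV[R]_d.

Record tta_state := TTAState { stS : nat; stL : nat; thS : V; thL : V }.

Definition tta_init : tta_state := TTAState 0 0 0 0.

Definition tta_add (s : tta_state) (x : V) : tta_state :=
  TTAState (stS s).+1 (stL s).+1
    (thS s + ((stS s).+1%:R)^-1 *: (x - thS s))
    (thL s + ((stL s).+1%:R)^-1 *: (x - thL s)).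

Definition tta_switch (s : tta_state) : tta_state :=
  TTAState 0 (stS s) (thS s) (thS s).

Definition tta_switchb (f : V -> R) (E t : nat) (s' : tta_state) : bool :=
  (E %| t)%N && (f (thS s') <= f (thL s')).

Definition tta_step (f : V -> R) (E t : nat) (s : tta_state) (x : V) :=
  let s' := tta_add s x in if tta_switchb f E t s' then tta_switch s' else s'.

Fixpoint tta_state_at (f : V -> R) (E : nat) (theta : nat -> V) (t : nat)
  : tta_state :=
  match t with
  | 0 => tta_init
  | t'.+1 => tta_step f E t'.+1 (tta_state_at f E theta t') (theta t'.+1)
  end.

(* Values in the t-th pass after theta_t is added but before the possible
   switch (meaningful for t >= 1): S'(t), theta^{S'}(t), ... *)
Definition tta_pre (f : V -> R) (E : nat) (theta : nat -> V) (t : nat) :=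
  tta_add (tta_state_at f E theta t.-1) (theta t).

Definition is_switch_point (f : V -> R) (E : nat) (theta : nat -> V) (n : nat)
  : bool := (0 < n)%N && tta_switchb f E n (tta_pre f E theta n).

Definition is_Nth_switch_point (f : V -> R) (E : nat) (theta : nat -> V)
  (N n : nat) : Prop :=
  is_switch_point f E theta n /\
  (\sum_(1 <= i < n.+1) is_switch_point f E theta i)%N = N.

Definition F_at (f : V -> R) (E : nat) (theta : nat -> V) (n : nat) : R :=
  f (thS (tta_pre f E theta n)).

End TTA.

From mathcomp Require Import all_boot all_order all_algebra.
From mathcomp Require Import all_classical all_reals all_analysis.
From mathcomp Require Import ring lra zify.
Set Implicit Arguments. Unset Strict Implicit. Unset Printing Implicit Defensive.
Import Order.TTheory GRing.Theory Num.Theory.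
Local Open Scope classical_set_scope.
Local Open Scope ring_scope.

(** After the switch at [Q_N] the long average restarts from the short
   average [m = theta^{S'}(Q_N)] with weight [S_N], and from then on it absorbs
   exactly the iterates that also enter the new short average.  Hence at
   [Q_{N+1}] the long average is the convex combination
   [(S_N m + k theta^S) / (S_N + k)] of [m] and the new short average
   [theta^S].  A switch means [f theta^S <= f theta^L], and by convexity
   [f theta^L <= a f m + (1 - a) f theta^S] with [a > 0], so
   [f theta^S <= f m], i.e. [F_{N+1} <= F_N]. *)

Section ConvexMixture.
Variables (R : realFieldType) (E : lmodType R) (f : E -> R).
Hypothesis f_convex : convex_function [set: E] f.

Lemma convex_mixture_le (a : R) (m x : E) : 0 < a -> a <= 1 ->
  f x <= f (a *: m + (1 - a) *: x) -> f x <= f m.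
Proof.
move=> a_gt0 a_le1 fx_le.
have fmix : f (a *: m + (1 - a) *: x) <= a * f m + (1 - a) * f x.
  by have := f_convex (Itv01 (ltW a_gt0) a_le1) (in_setT m) (in_setT x).
have : a * f x <= a * f m by lra.
by rewrite ler_pM2l.
Qed.

Lemma convex_weighted_mean_le (p q : nat) (m x y : E) : (0 < p)%N ->
  (p + q)%:R *: y = p%:R *: m + q%:R *: x -> f x <= f y -> f x <= f m.
Proof.
move=> p_gt0 ey fx_le; set n : R := (p + q)%:R in ey *.
have n_gt0 : 0 < n by rewrite ltr0n addn_gt0 p_gt0.
have n_neq0 : n != 0 := lt0r_neq0 n_gt0.
have a_gt0 : 0 < p%:R / n by rewrite divr_gt0 // ltr0n.
have a_le1 : p%:R / n <= 1 by rewrite ler_pdivrMr // mul1r ler_nat leq_addr.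
apply: (convex_mixture_le a_gt0 a_le1).
suff <- : y = (p%:R / n) *: m + (1 - p%:R / n) *: x by [].
have -> : 1 - p%:R / n = q%:R / n by rewrite /n natrD; field; rewrite -natrD gt_eqF.
apply: (scalerI n_neq0).
by rewrite ey scalerDr !scalerA !(mulrCA n) mulfV // !mulr1.
Qed.

End ConvexMixture.

Section Hits.
Variable p : nat -> bool.

Definition hits (n : nat) : nat := (\sum_(1 <= i < n.+1) p i)%N.

Lemma hits_split m n : (m <= n)%N ->
  hits n = (hits m + \sum_(m.+1 <= i < n.+1) p i)%N.
Proof. by move=> mn; rewrite /hits -big_cat_nat. Qed.

Lemma leq_hits m n : (m <= n)%N -> (hits m <= hits n)%N.
Proof. by move/hits_split->; rewrite leq_addr. Qed.

Lemma hits_lt m n : (m < n)%N -> (hits m + p n <= hits n)%N.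
Proof.
move=> mn; rewrite (hits_split (ltnW mn)) leq_add2l big_nat_recr //=.
exact: leq_addl.
Qed.

Lemma consecutive_hits N m n : p n -> hits m = N -> hits n = N.+1 ->
  (m < n)%N /\ forall i, (m < i < n)%N -> ~~ p i.
Proof.
move=> pn hm hn; split.
  by rewrite ltnNge; apply/negP => /leq_hits; rewrite hm hn ltnn.
move=> i /andP[mi i_n]; apply/negP => pi.
by move: (hits_lt mi) (hits_lt i_n); rewrite hm hn pi pn /=; lia.
Qed.

End Hits.

Section LongAverageMixture.
Variables (R : realType) (d : nat).
Local Notation V := 'rV[R]_d.

Definition mixed_state (S0 : nat) (m : V) (k : nat) (s : tta_state R d) : Prop :=
  [/\ stS s = k, stL s = (S0 + k)%N &
      (S0 + k)%:R *: thL s = S0%:R *: m + k%:R *: thS s].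

Lemma mixed_state_switch (s : tta_state R d) :
  mixed_state (stS s) (thS s) 0 (tta_switch s).
Proof. by split; rewrite /= ?addn0 ?scale0r ?addr0. Qed.

Lemma mixed_state_add S0 m k s x :
  mixed_state S0 m k s -> mixed_state S0 m k.+1 (tta_add s x).
Proof.
case=> hS hL hE; split; rewrite /= ?hS ?hL ?addnS //.
rewrite !scalerDr !scalerA !mulfV ?pnatr_eq0 // !scale1r.
rewrite -!natr1 !scalerDl !scale1r hE -[LHS]addrA [thL s + _]addrC subrK.
by rewrite -[_ + thS s + _]addrA [thS s + _]addrC subrK addrA.
Qed.

Variables (f : V -> R) (E : nat) (theta : nat -> V).
Local Notation sp := (is_switch_point f E theta).
Local Notation pre := (tta_pre f E theta).

Lemma tta_pre_next t : pre t.+2 =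
  tta_add (if sp t.+1 then tta_switch (pre t.+1) else pre t.+1) (theta t.+2).
Proof. by []. Qed.

Lemma mixed_state_until_next_switch Q k : sp Q ->
  (forall i, (Q < i < Q + k.+1)%N -> ~~ sp i) ->
  mixed_state (stS (pre Q)) (thS (pre Q)) k.+1 (pre (Q + k.+1)).
Proof.
case: Q => [//|Q] spQ; elim: k => [|k IHk] no_sp.
  by rewrite addn1 tta_pre_next spQ; apply/mixed_state_add/mixed_state_switch.
rewrite !addnS tta_pre_next -!addnS (negbTE (no_sp _ _)); last by lia.
by apply/mixed_state_add/IHk => i ?; apply: no_sp; lia.
Qed.

End LongAverageMixture.

Theorem mainTheorem5 (R : realType) (d : nat) (f : 'rV[R]_d -> R) (E : nat)
  (theta : nat -> 'rV[R]_d) :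
  convex_function [set: 'rV[R]_d] f ->
  (0 < E)%N ->
  forall (N QN QN1 : nat), (0 < N)%N ->
    is_Nth_switch_point f E theta N QN ->
    is_Nth_switch_point f E theta N.+1 QN1 ->
    F_at f E theta QN1 <= F_at f E theta QN.
Proof.
move=> f_convex _ N QN QN1 _ [spQN hitsQN] [spQN1 hitsQN1].
have [lt_QN no_sp] := consecutive_hits spQN1 hitsQN hitsQN1.
have [k QN1E] : exists k, QN1 = (QN + k.+1)%N by exists (QN1 - QN).-1; lia.
subst QN1.
case: (mixed_state_until_next_switch spQN no_sp) => _ _ long_avg.
apply: (convex_weighted_mean_le f_convex _ long_avg) => //.
by case/andP: spQN1 => _ /andP[_].
Qed.
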